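(* Fix an integer $k\ge 1$. Let $(X_1,\dots,X_n)$ be the $\{0,1\}$-valued Markov chain with $X_1=1$ and the following transitions for $1\le \ell\le n-1$: if $X_\ell=0$ then $X_{\ell+1}=1$, and if $X_\ell=1$ then $X_{\ell+1}$ equals $0$ or $1$ with probability $1/2$ each. Let $A\in\{0,1\}^{m\times n}$ have as rows $m$ independent realizations of this chain. Then every row of $A$ is a feasible measurement for the graph $\mathcal{G}^4_n$. Moreover, there is a function $g$ depending only on $k$ such that the following holds: if $m\ge g(k)\log n$, then the probability that $A$ identifies all $k$-sparse vectors in $\mathbb{R}^n$ tends to $1$ as $n\to\infty$. One admissible choice is $g(k)=(2k+1)2^{4k^2+2k-1}/(2k-1)!$.
   Context: $\mathcal{G}^4_n$ ($n\ge 5$) is the graph on $\{1,\dots,n\}$ in which each node $i$ is adjacent to $i\pm1$ and $i\pm2 \pmod n$. A row $a\in\{0,1\}^n$ is a feasible measurement for a graph $G$ if its support $\{j:a_j=1\}$ induces a connected subgraph of $G$. A vector $x\in\mathbb{R}^n$ is $k$-sparse if it has at most $k$ nonzero entries. $A$ identifies all $k$-sparse vectors if $Ax_1\neq Ax_2$ for every two distinct $k$-sparse vectors $x_1,x_2$. *)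

From Stdlib Require Import Reals ClassicalEpsilon.
From mathcomp Require Import all_boot.
Set Implicit Arguments. Unset Strict Implicit. Unset Printing Implicit Defensive.

(* Nodes of G^4_n are 0..n-1 (paper: 1..n). *)
Definition G4adj (n : nat) (i j : 'I_n) : bool :=
  (i != j) &&
  (((j + n - i) %% n)%N \in [:: 1; 2; n - 1; n - 2]%N).

Definition row01 (n : nat) := {ffun 'I_n -> bool}.

Definition feasible (n : nat) (a : row01 n) : Prop :=
  forall i j : 'I_n, a i -> a j ->
    connect [rel u v | [&& a u, a v & G4adj u v]] i j.

(* entry at natural index l (false outside range) *)
Definition at_ (n : nat) (a : row01 n) (l : nat) : bool :=
  match @insub nat (fun x => x < n) _ l with Some j => a j | None => false end.

(* Probability that one realization of the Markov chain equals a
   (X_1 = 1; after a 0 comes a 1; after a 1 comes 0 or 1 w.p. 1/2). *)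
Definition trans (x y : bool) : R :=
  if x then Rinv (INR 2) else (if y then R1 else R0).

Definition rowProb (n : nat) (a : row01 n) : R :=
  Rmult (if at_ a 0 then R1 else R0)
   (\big[Rmult/R1]_(l < n.-1) trans (at_ a l) (at_ a l.+1)).

Definition mat01 (m n : nat) := {ffun 'I_m -> row01 n}.

Definition matProb (m n : nat) (A : mat01 m n) : R :=
  \big[Rmult/R1]_(i < m) rowProb (A i).

Definition mulv (m n : nat) (A : mat01 m n) (x : 'I_n -> R) : 'I_m -> R :=
  fun i => \big[Rplus/R0]_(j < n) (if A i j then x j else R0).

Definition nonzero (r : R) : bool := if Req_EM_T r R0 then false else true.

Definition sparse (k n : nat) (x : 'I_n -> R) : Prop :=
  #|[pred j | nonzero (x j)]| <= k.

Definition identifies (k m n : nat) (A : mat01 m n) : Prop :=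
  forall x1 x2 : 'I_n -> R, sparse k x1 -> sparse k x2 -> x1 <> x2 ->
    mulv A x1 <> mulv A x2.

Definition indicator (P : Prop) : R :=
  if excluded_middle_informative P then R1 else R0.

Definition probIdent (k m n : nat) : R :=
  \big[Rplus/R0]_(A : mat01 m n) Rmult (matProb A) (indicator (identifies k A)).

Definition gk (k : nat) : R :=
  Rdiv (Rmult (INR (2 * k + 1)) (pow (INR 2) (4 * k * k + 2 * k - 1))) (INR ((2 * k - 1)`!)).

From Pilot Require Import Defs.
From Stdlib Require Import Reals.
From mathcomp Require Import all_boot.
From Stdlib Require Import Lra Lia ClassicalEpsilon FunctionalExtensionality.
From mathcomp Require Import zify.
From HB Require Import structures.

Set Implicit Arguments. Unset Strict Implicit. Unset Printing Implicit Defensive.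

(* Feasibility: a row of positive probability starts with 1 and has no two
   consecutive zeros, so each of its 1-entries is joined to the previous
   1-entry, at cycle distance 1 or 2, by an edge of G^4_n.

   Identification: a row is the image of n-1 uniform coins c under
   X_0 = 1, X_(l+1) = ~~ X_l || c_l, so any row event forced by fixing r
   coins has probability at least 2^-r.  For a tuple f of 2k+1 columns,
   "the row is 1 on all of f" is forced by 2k+1 coins and "the row is 0 on
   f 0 and 1 on the rest of f" by 2k+2 coins.  If every tuple admits rows
   of both kinds (the second only when f 0 is not column 0), then A
   identifies all k-sparse vectors: the difference of two such rows
   isolates a single coordinate of any 2k-sparse x in the kernel of A.
   A union bound over the n^(2k+1) tuples bounds the failure probability
   by 2 n^(2k+1) (1 - 2^-(2k+2))^m, which tends to 0 when m >= g ln n and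
   2^-(2k+2) g > 2k+1; the constant g(k) of the statement satisfies this. *)

Lemma RplusA : associative Rplus. Proof. by move=> x y z; ring. Qed.
Lemma RmultA : associative Rmult. Proof. by move=> x y z; ring. Qed.
HB.instance Definition _ :=
  Monoid.isComLaw.Build R R0 Rplus RplusA Rplus_comm Rplus_0_l.
HB.instance Definition _ :=
  Monoid.isComLaw.Build R R1 Rmult RmultA Rmult_comm Rmult_1_l.
HB.instance Definition _ :=
  Monoid.isMulLaw.Build R R0 Rmult Rmult_0_l Rmult_0_r.
HB.instance Definition _ :=
  Monoid.isAddLaw.Build R Rmult Rplus Rmult_plus_distr_r Rmult_plus_distr_l.

Lemma at_ord n (a : row01 n) (i : 'I_n) : at_ a i = a i.
Proof. by rewrite /at_ insubT //= => lt_i; congr (a _); exact: val_inj. Qed.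

Lemma rowProb_pos_shape n (a : row01 n) : Rgt (rowProb a) R0 ->
  at_ a 0 /\ forall l, (l.+1 < n)%N -> at_ a l || at_ a l.+1.
Proof.
rewrite /rowProb => pos; split.
  by move: pos; case: (at_ a 0) => //; rewrite Rmult_0_l; lra.
move=> l lt_l; apply/negPn/negP; rewrite negb_or => /andP[a_l a_l1].
have lt_l' : (l < n.-1)%N by lia.
move: pos; rewrite (bigD1 (Ordinal lt_l')) //= /trans (negbTE a_l) (negbTE a_l1).
rewrite Rmult_0_l Rmult_0_r; lra.
Qed.

Lemma G4adj_close n (u v : 'I_n) : (5 <= n)%N -> u != v ->
  (u <= v + 2)%N -> (v <= u + 2)%N -> G4adj u v.
Proof.
move=> n_ge5 u_neq_v uv vu; rewrite /G4adj u_neq_v /= !inE.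
case: (ltngtP u v) => [lt_uv|lt_vu|eq_uv]; last by rewrite (val_inj eq_uv) eqxx in u_neq_v.
- have [d -> d12] : exists2 d, (v + n - u = n + d)%N & (d == 1) || (d == 2).
    by exists (v - u)%N; lia.
  by rewrite modnDl modn_small; case/orP: d12 => /eqP ->; rewrite ?eqxx ?orbT //; lia.
- have [d -> d12] : exists2 d, (v + n - u = n - d)%N & (d == 1) || (d == 2).
    by exists (u - v)%N; lia.
  by rewrite modn_small; case/orP: d12 => /eqP ->; rewrite ?eqxx ?orbT //; lia.
Qed.

Lemma active_predecessor n (a : row01 n) (i : 'I_n) :
  at_ a 0 -> (forall l, (l.+1 < n)%N -> at_ a l || at_ a l.+1) ->
  (0 < i)%N -> exists j : 'I_n, [/\ (j < i)%N, (i <= j + 2)%N & a j].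
Proof.
move=> a0 no00 i_gt0.
have lt1 : (i.-1 < n)%N by have := ltn_ord i; lia.
case a1: (a (Ordinal lt1)); first by exists (Ordinal lt1); split=> //=; lia.
have i_gt1 : (1 < i)%N.
  case: (ltnP 1 i) => // le_i1; move: a1; rewrite -at_ord /=.
  by rewrite (_ : i.-1 = 0)%N ?a0 //; lia.
have lt2 : (i.-2 < n)%N by lia.
exists (Ordinal lt2); split=> //=; try lia.
have := no00 i.-2 ltac:(lia); rewrite (_ : i.-2.+1 = i.-1); last by lia.
by rewrite -[i.-2]/(val (Ordinal lt2)) -[i.-1]/(val (Ordinal lt1)) !at_ord a1 orbF.
Qed.

(* Part 1 of the theorem: the support of a realization is connected,
   since every active node is linked in both directions to node 0. *)
Lemma chain_row_feasible n (a : row01 n) :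
  (5 <= n)%N -> Rgt (rowProb a) R0 -> feasible a.
Proof.
move=> n_ge5 /rowProb_pos_shape [a0 no00].
set e := [rel u v | [&& a u, a v & G4adj u v]].
have n_gt0 : (0 < n)%N by lia.
pose z := Ordinal n_gt0.
suff linked : forall i : 'I_n, a i -> connect e z i /\ connect e i z.
  move=> i j a_i a_j; apply: (connect_trans (linked i a_i).2).
  exact: (linked j a_j).1.
move=> i; have [d] := ubnP i; elim: d i => // d IH i lt_id a_i.
have [i0|i_gt0] := posnP i.
  by rewrite (_ : i = z) ?connect0 //; exact: val_inj.
have [j [lt_ji le_ij a_j]] := active_predecessor a0 no00 i_gt0.
have [zj jz] := IH j (leq_trans lt_ji lt_id) a_j.
have ne_ji : j != i by apply/eqP => eq_ji; rewrite eq_ji ltnn in lt_ji.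
split.
- apply: (connect_trans zj); apply: connect1; rewrite /= a_j a_i /=.
  by apply: G4adj_close => //; lia.
- apply: connect_trans jz; apply: connect1; rewrite /= a_j a_i /=.
  by apply: G4adj_close => //; [rewrite eq_sym | lia..].
Qed.

Lemma iter_Rplus k x : iter k (Rplus x) R0 = Rmult (INR k) x.
Proof. by elim: k => [|k IH]; rewrite ?iterS ?IH ?S_INR /=; ring. Qed.

Lemma iter_Rmult k x : iter k (Rmult x) R1 = pow x k.
Proof. by elim: k => [|k IH] //=; rewrite IH. Qed.

Lemma sum_const_card (T : finType) (P : pred T) (x : R) :
  \big[Rplus/R0]_(i | P i) x = Rmult (INR #|P|) x.
Proof. by rewrite big_const iter_Rplus. Qed.

Lemma INR_muln a b : INR (a * b) = Rmult (INR a) (INR b).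
Proof. exact: mult_INR. Qed.

Lemma INR_expn a b : INR (a ^ b) = pow (INR a) b.
Proof. by elim: b => [|b IH] //=; rewrite expnS INR_muln IH. Qed.

(* The chain driven by coins c_0, ..., c_(n-2): X_0 = 1 and
   X_(l+1) = ~~ X_l || c_l, i.e. after a 0 comes a 1 and after a 1 comes
   the next coin.  Uniform coins thus produce the law rowProb. *)
Fixpoint chain_bit N (c : row01 N) (l : nat) : bool :=
  if l is l'.+1 then ~~ chain_bit c l' || at_ c l' else true.

Definition chain_row n (c : row01 n.-1) : row01 n := [ffun i : 'I_n => chain_bit c i].

Lemma at_chain_row n (c : row01 n.-1) l : (l < n)%N -> at_ (chain_row c) l = chain_bit c l.
Proof. by move=> lt_ln; rewrite -[l]/(val (Ordinal lt_ln)) at_ord ffunE. Qed.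

Definition coin_choices n (a : row01 n) (l : 'I_n.-1) : pred bool :=
  if at_ a l then pred1 (at_ a l.+1) else if at_ a l.+1 then predT else pred0.

Lemma chain_row_fiber n (a : row01 n) (c : row01 n.-1) : (0 < n)%N ->
  (chain_row c == a) = at_ a 0 && (c \in family (coin_choices a)).
Proof.
move=> n_gt0; apply/eqP/andP => [<-|[a0 /familyP compat]].
  split; first by rewrite at_chain_row.
  apply/familyP => l; have lt_l1 : (l.+1 < n)%N by have := ltn_ord l; lia.
  rewrite /coin_choices !at_chain_row //=; last by lia.
  by rewrite -at_ord; case: (chain_bit c l); rewrite /= ?inE.
have agree : forall l, (l < n)%N -> at_ a l = chain_bit c l.
  elim=> [|l IH] lt_ln //=.
  have lt_l : (l < n.-1)%N by lia.
  have := compat (Ordinal lt_l); rewrite /coin_choices /= -IH; last by lia.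
  rewrite -[c _]at_ord /=.
  by case: (at_ a l) => /=; [move/eqP|]; case: (at_ a l.+1).
by apply/ffunP => i; rewrite ffunE -agree // at_ord.
Qed.

Lemma rowProb_fiber n (a : row01 n) : (0 < n)%N ->
  rowProb a = Rmult (pow (/2) n.-1) (INR #|[pred c : row01 n.-1 | chain_row c == a]|).
Proof.
move=> n_gt0; rewrite (eq_card (B := [pred c | at_ a 0 && (c \in family (coin_choices a))])).
  rewrite /rowProb; case: (at_ a 0); last by rewrite card0 /=; ring.
  rewrite Rmult_1_l (eq_card (B := family (coin_choices a))) //.
  rewrite card_family foldrE big_map big_enum (big_morph INR INR_muln (erefl _)).
  rewrite -iter_Rmult -big_const_ord -big_split /=.
  apply: eq_bigr => l _; rewrite /coin_choices /trans.
  by case: (at_ a l); case: (at_ a l.+1); rewrite /= ?card1 ?card_bool ?card0 /=; field.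
by move=> c; rewrite !inE chain_row_fiber.
Qed.

Lemma expectation_coins n (F : row01 n -> R) : (0 < n)%N ->
  \big[Rplus/R0]_(a : row01 n) Rmult (rowProb a) (F a) =
  Rmult (pow (/2) n.-1) (\big[Rplus/R0]_(c : row01 n.-1) F (chain_row c)).
Proof.
move=> n_gt0; rewrite (partition_big (@chain_row n) xpredT) //= big_distrr /=.
apply: eq_bigr => a _; rewrite (eq_bigr (fun _ => F a)); last by move=> c /eqP ->.
by rewrite rowProb_fiber // sum_const_card Rmult_assoc.
Qed.

Lemma rowProb_total n : (0 < n)%N -> \big[Rplus/R0]_(a : row01 n) rowProb a = R1.
Proof.
move=> n_gt0; rewrite (eq_bigr (fun a => Rmult (rowProb a) R1)); last by move=> a _; ring.
rewrite expectation_coins // sum_const_card Rmult_1_r card_ffun card_bool card_ord.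
by rewrite INR_expn -Rpow_mult_distr /= Rinv_l ?pow1 //; lra.
Qed.

Definition ind (b : bool) : R := if b then R1 else R0.

Lemma ind_ge0 b : Rle R0 (ind b). Proof. by case: b; rewrite /ind; lra. Qed.

Lemma sum_le (T : finType) (F G : T -> R) : (forall i, Rle (F i) (G i)) ->
  Rle (\big[Rplus/R0]_(i : T) F i) (\big[Rplus/R0]_(i : T) G i).
Proof. by move=> FG; apply: (big_ind2 Rle) => //; [lra | move=> *; lra]. Qed.

Lemma sum_ge0 (T : finType) (F : T -> R) :
  (forall i, Rle R0 (F i)) -> Rle R0 (\big[Rplus/R0]_(i : T) F i).
Proof. by move=> F_ge0; apply: (big_ind (Rle R0)) => //; [lra | move=> *; lra]. Qed.

Lemma sum_sub (T : finType) (F G : T -> R) :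
  \big[Rplus/R0]_(i : T) (Rminus (F i) (G i)) =
  Rminus (\big[Rplus/R0]_(i : T) F i) (\big[Rplus/R0]_(i : T) G i).
Proof.
rewrite /Rminus big_split /=; congr Rplus; symmetry.
by apply: (big_morph Ropp (id1 := R0) (op1 := Rplus)) => [x y|]; ring.
Qed.

Definition coins_fixed N (ps : seq nat) (vals : nat -> bool) : pred (row01 N) :=
  [pred c | all (fun p => (p < N)%N ==> (at_ c p == vals p)) ps].
Arguments coins_fixed : clear implicits.

Lemma coins_fixed_at N ps vals (c : row01 N) p :
  c \in coins_fixed N ps vals -> p \in ps -> (p < N)%N -> at_ c p = vals p.
Proof. by rewrite inE => /allP fixed p_ps lt_pN; have /implyP/(_ lt_pN)/eqP := fixed p p_ps. Qed.

Lemma card_coins_fixed N ps vals :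
  #|coins_fixed N ps vals| = (\prod_(0 <= l < N) (if l \in ps then 1 else 2))%N.
Proof.
pose choice (l : 'I_N) : pred bool := if val l \in ps then pred1 (vals l) else predT.
rewrite (eq_card (B := family choice)); last first.
  move=> c; rewrite !inE; apply/allP/familyP => [fixed l | fam p p_ps].
    by rewrite /choice; case: ifP => // l_ps; have := fixed _ l_ps; rewrite ltn_ord (at_ord c l) inE.
  apply/implyP => lt_pN; have := fam (Ordinal lt_pN).
  by rewrite /choice /= p_ps inE (at_ord c (Ordinal lt_pN)).
rewrite card_family foldrE big_map big_enum big_mkord.
by apply: eq_bigr => l _; rewrite /choice; case: ifP; rewrite ?card1 // (eq_card (B := predT)) ?card_bool.
Qed.

Lemma prod_choices N (ps : seq nat) :
  ((\prod_(0 <= l < N) (if l \in ps then 1 else 2)) * 2 ^ count (mem ps) (iota 0 N) = 2 ^ N)%N.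
Proof.
elim: N => [|N IH]; first by rewrite big_geq.
have iotaS : iota 0 N.+1 = iota 0 N ++ [:: N] by rewrite -addn1 iotaD.
rewrite big_nat_recr // iotaS count_cat /= expnS -IH addn0 expnD.
by case: (N \in ps) => /=; nia.
Qed.

Lemma card_coins_fixed_ge N ps vals :
  Rle (pow (/2) (size ps)) (Rmult (pow (/2) N) (INR #|coins_fixed N ps vals|)).
Proof.
have count_ps : (count (mem ps) (iota 0 N) <= size ps)%N.
  rewrite -size_filter uniq_leq_size ?filter_uniq ?iota_uniq // => x.
  by rewrite mem_filter => /andP[].
have /leP/le_INR : (2 ^ N <= #|coins_fixed N ps vals| * 2 ^ size ps)%N.
  rewrite card_coins_fixed -(prod_choices N ps) leq_mul2l leq_pexp2l //.
  by rewrite orbT.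
rewrite INR_muln !INR_expn !pow_inv (_ : INR 2 = IZR 2) => [bound|]; last by rewrite /=; lra.
have pos_N : Rlt R0 (pow 2 N) by apply: pow_lt; lra.
have pos_ps : Rlt R0 (pow 2 (size ps)) by apply: pow_lt; lra.
apply: (Rmult_le_reg_r (Rmult (pow 2 N) (pow 2 (size ps)))); first nra.
by field_simplify; nra.
Qed.

Lemma event_prob_ge n (P : pred (row01 n)) ps vals : (0 < n)%N ->
  (forall c : row01 n.-1, c \in coins_fixed n.-1 ps vals -> P (chain_row c)) ->
  Rle (pow (/2) (size ps)) (\big[Rplus/R0]_(a : row01 n) Rmult (rowProb a) (ind (P a))).
Proof.
move=> n_gt0 forced; rewrite expectation_coins //.
apply: (Rle_trans _ _ _ (card_coins_fixed_ge n.-1 ps vals)).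
apply: Rmult_le_compat_l; first by apply: pow_le; lra.
rewrite -[X in Rle X _]Rmult_1_r -sum_const_card big_mkcond /=.
apply: sum_le => c; rewrite /ind; case: ifP => fixed; first by rewrite forced //; lra.
by case: (P _); lra.
Qed.

Section Patterns.
Variables (n D : nat).
Implicit Types (f : {ffun 'I_D.+1 -> 'I_n}) (a : row01 n).

Definition covers f a : bool := [forall i, a (f i)].
Definition separates f a : bool :=
  ~~ a (f ord0) && [forall i, (f i != f ord0) ==> a (f i)].

(* Coins forcing each pattern: X_p = 1 is forced by coin p-1 being 1
   (X_0 = 1 always); X_j = 0 is forced by coin j-1 being 0 after coin j-2
   being 1 (which makes X_(j-1) = 1). *)
Definition cover_coins f : seq nat := [seq (f i : nat).-1 | i <- enum 'I_D.+1].
Definition separate_coins f : seq nat := (f ord0 : nat).-2 :: cover_coins f.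

Lemma size_cover_coins f : size (cover_coins f) = D.+1.
Proof. by rewrite size_map size_enum_ord. Qed.

Lemma cover_coinsP f i : (f i : nat).-1 \in cover_coins f.
Proof. by apply/mapP; exists i; rewrite ?mem_enum. Qed.

Lemma cover_forced f (c : row01 n.-1) :
  c \in coins_fixed n.-1 (cover_coins f) (fun _ => true) -> covers f (chain_row c).
Proof.
move=> fixed; apply/forallP => i; rewrite -at_ord at_chain_row //.
have := ltn_ord (f i); have := cover_coinsP f i.
case: (f i : nat) => [|p] //= p_in lt_pn.
by rewrite (coins_fixed_at fixed) ?orbT //; lia.
Qed.

Lemma separate_forced f (c : row01 n.-1) : (f ord0 : nat) != 0%N ->
  c \in coins_fixed n.-1 (separate_coins f) (fun p => p != (f ord0 : nat).-1) ->
  separates f (chain_row c).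
Proof.
move=> j_neq0 fixed.
have in_sep i : (f i : nat).-1 \in separate_coins f by rewrite inE cover_coinsP orbT.
apply/andP; split.
  rewrite -at_ord at_chain_row //; have := ltn_ord (f ord0); have := in_sep ord0.
  case ej: (f ord0 : nat) j_neq0 => [|j] //= _ j_in lt_jn.
  rewrite (coins_fixed_at fixed j_in) /= ?ej ?eqxx ?orbF ?negbK; last by lia.
  case: j ej j_in lt_jn => [|j] // ej _ lt_jn /=.
  have j_head : j \in separate_coins f by rewrite inE ej eqxx.
  by rewrite (coins_fixed_at fixed j_head) ?ej ?orbT //; lia.
apply/forallP => i; apply/implyP => fi_neq; rewrite -at_ord at_chain_row //.
have := ltn_ord (f i); have := in_sep i.
case e: (f i : nat) => [|p] //= p_in lt_pn.
have p_neq : p != (f ord0 : nat).-1.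
  by apply/eqP => p_eq; move/eqP: fi_neq; apply; apply: val_inj; rewrite /= e; lia.
by rewrite (coins_fixed_at fixed p_in) /= ?p_neq ?orbT //; lia.
Qed.
End Patterns.

Lemma nonzeroP r : reflect (r <> R0) (Defs.nonzero r).
Proof. by rewrite /Defs.nonzero; case: Req_EM_T => ?; constructor. Qed.

Lemma nonzeroPn r : reflect (r = R0) (~~ Defs.nonzero r).
Proof. by rewrite /Defs.nonzero; case: Req_EM_T => ?; constructor. Qed.

Definition dot n (r : row01 n) (x : 'I_n -> R) : R :=
  \big[Rplus/R0]_(j < n) (if r j then x j else R0).

Lemma dot_isolates n (T : {pred 'I_n}) (x : 'I_n -> R) (r1 r2 : row01 n) (j : 'I_n) :
  (forall t, t \notin T -> x t = R0) ->
  (forall t, t \in T -> r1 t) -> (forall t, t \in T -> t != j -> r2 t) ->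
  r1 j -> ~~ r2 j -> Rminus (dot r1 x) (dot r2 x) = x j.
Proof.
move=> x_off r1_T r2_T r1_j r2_j.
rewrite /dot -sum_sub -(big_pred1_eq (idx := R0) Rplus j x) big_mkcond /=.
apply: eq_bigr => t _; case: eqP => [->|/eqP t_neq].
  by rewrite r1_j (negbTE r2_j); ring.
have [t_T|t_T] := boolP (t \in T); last by rewrite x_off //; case: (r1 t); case: (r2 t); ring.
by rewrite r1_T // r2_T //; ring.
Qed.

Lemma tuple_covering n D (T : {pred 'I_n}) (j : 'I_n) : (#|T| <= D)%N ->
  exists f : {ffun 'I_D.+1 -> 'I_n}, f ord0 = j /\ forall t, t \in T -> exists i, f i = t.
Proof.
move=> card_T; exists [ffun i : 'I_D.+1 => nth j (j :: enum T) i].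
split=> [|t t_T]; first by rewrite ffunE.
have t_in : t \in j :: enum T by rewrite inE mem_enum t_T orbT.
have lt_t : (index t (j :: enum T) < D.+1)%N.
  by apply: leq_trans (_ : size (j :: enum T) <= _)%N; rewrite ?index_mem //= -cardE.
by exists (Ordinal lt_t); rewrite ffunE nth_index.
Qed.

Lemma sparse_sub k n (x1 x2 : 'I_n -> R) : sparse k x1 -> sparse k x2 ->
  sparse (2 * k) (fun j => Rminus (x1 j) (x2 j)).
Proof.
rewrite /sparse => sp1 sp2.
apply: (leq_trans (n := #|[predU [pred j | Defs.nonzero (x1 j)] & [pred j | Defs.nonzero (x2 j)]]|)).
  apply: subset_leq_card; apply/subsetP => j; rewrite !inE; apply: contraTT.
  by rewrite negb_or => /andP[/nonzeroPn -> /nonzeroPn ->]; apply/nonzeroPn; ring.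
apply: leq_trans (leq_addr #|[predI [pred j | Defs.nonzero (x1 j)] & [pred j | Defs.nonzero (x2 j)]]| _) _.
by rewrite cardUI mul2n -addnn leq_add.
Qed.

Lemma kernel_dot m n (A : mat01 m n) (x1 x2 : 'I_n -> R) : mulv A x1 = mulv A x2 ->
  forall i, dot (A i) (fun j => Rminus (x1 j) (x2 j)) = R0.
Proof.
move=> Ax_eq i; have := congr1 (fun y => y i) Ax_eq; rewrite /mulv => Axi_eq.
rewrite /dot (eq_bigr (fun j => Rminus (if A i j then x1 j else R0) (if A i j then x2 j else R0))).
  by rewrite sum_sub Axi_eq; apply: Rminus_diag_eq.
by move=> j _; case: (A i j); ring.
Qed.

Definition separating (D m n : nat) (A : mat01 m n) : bool :=
  [forall f : {ffun 'I_D.+1 -> 'I_n}, [exists i, covers f (A i)] &&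
     (((f ord0 : nat) != 0%N) ==> [exists i, separates f (A i)])].

(* If x = x1 - x2 != 0 is 2k-sparse with A x = 0, pick a support column j
   (nonzero if possible) and a tuple f listing j first and the whole
   support; a covering row and a separating (or the zero) row then have
   inner products with x differing by x j != 0, a contradiction. *)
Lemma separating_identifies k m n (A : mat01 m n) : separating (2 * k) A -> identifies k A.
Proof.
move=> /forallP sepA x1 x2 sp1 sp2 x1_neq Ax_eq.
pose x j := Rminus (x1 j) (x2 j).
pose T := [pred j | Defs.nonzero (x j)].
have card_T : (#|T| <= 2 * k)%N := sparse_sub sp1 sp2.
have x_off t : t \notin T -> x t = R0 by move/nonzeroPn.
have dot0 i : dot (A i) x = R0 := kernel_dot Ax_eq i.
have covered (f : {ffun 'I_(2 * k).+1 -> 'I_n}) i :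
    (forall t, t \in T -> exists i, f i = t) -> covers f (A i) -> forall t, t \in T -> A i t.
  by move=> f_T /forallP cov t /f_T [i' <-].
have [j0 j0_T] : exists j0, j0 \in T.
  case: (pickP T) => [j0 j0_T|T0]; first by exists j0.
  case: x1_neq; apply: functional_extensionality => j.
  by have := x_off j (negbT (T0 j)); rewrite /x; lra.
case: (pickP [pred j | (j \in T) && ((j : nat) != 0%N)]) => [j /andP[j_T j_neq0] | T_in_0].
- have [f [f0 f_T]] := tuple_covering j card_T.
  have /andP[/existsP[i1 cov] /implyP sep] := sepA f.
  have /existsP[i2 /andP[i2_j /forallP i2_T]] := sep ltac:(by rewrite f0).
  move/nonzeroP: j_T; apply.
  rewrite -(dot_isolates (T := T) (r1 := A i1) (r2 := A i2) x_off) ?dot0; try ring.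
  + exact: covered cov.
  + by move=> t /f_T [i <-] f_neq; have /implyP := i2_T i; rewrite f0; apply.
  + by have /forallP := cov; move/(_ ord0); rewrite f0.
  + by rewrite -f0.
- have [f [f0 f_T]] := tuple_covering j0 card_T.
  have /andP[/existsP[i1 cov] _] := sepA f.
  have zero_col t : t \in T -> t = j0.
    move=> t_T; apply: val_inj; have := T_in_0 t; have := T_in_0 j0.
    by rewrite /= t_T j0_T /= => /negbFE/eqP -> /negbFE/eqP ->.
  move/nonzeroP: j0_T; apply.
  rewrite -(dot_isolates (T := T) (r1 := A i1) (r2 := [ffun=> false]) x_off) ?dot0.
  + by rewrite /dot big1 => [|t _]; rewrite ?ffunE; ring.
  + exact: covered cov.
  + by move=> t /zero_col ->; rewrite eqxx.
  + by have /forallP := cov; move/(_ ord0); rewrite f0.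
  + by rewrite ffunE.
Qed.

Lemma rowProb_ge0 n (a : row01 n) : Rle R0 (rowProb a).
Proof.
rewrite /rowProb; apply: Rmult_le_pos; first by case: (at_ a 0); lra.
apply: (big_ind (Rle R0)); [lra | exact: Rmult_le_pos |].
by move=> l _; rewrite /trans; case: (at_ a l); case: (at_ a l.+1); rewrite /=; lra.
Qed.

Lemma matProb_ge0 m n (A : mat01 m n) : Rle R0 (matProb A).
Proof.
by apply: (big_ind (Rle R0)); [lra | exact: Rmult_le_pos | move=> i _; exact: rowProb_ge0].
Qed.

Lemma prod_ind (I : finType) (b : I -> bool) :
  \big[Rmult/R1]_(i : I) ind (b i) = ind [forall i, b i].
Proof.
have [/forallP all_b | ] := boolP [forall i, b i]; first by rewrite big1 // => i _; rewrite all_b.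
by rewrite negb_forall => /existsP [i not_bi]; rewrite (bigD1 i) //= (negbTE not_bi) /ind Rmult_0_l.
Qed.

Lemma sum_row_products m n (F : row01 n -> R) :
  \big[Rplus/R0]_(A : mat01 m n) \big[Rmult/R1]_(i < m) F (A i) =
  pow (\big[Rplus/R0]_(a : row01 n) F a) m.
Proof. by rewrite -iter_Rmult -big_const_ord (bigA_distr_bigA (fun _ : 'I_m => F)). Qed.

Lemma matProb_total m n : (0 < n)%N -> \big[Rplus/R0]_(A : mat01 m n) matProb A = R1.
Proof. by move=> n_gt0; rewrite /matProb sum_row_products rowProb_total // pow1. Qed.

Lemma no_row_prob_le m n (P : pred (row01 n)) p : (0 < n)%N ->
  Rle p (\big[Rplus/R0]_(a : row01 n) Rmult (rowProb a) (ind (P a))) ->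
  Rle (\big[Rplus/R0]_(A : mat01 m n) Rmult (matProb A) (ind (~~ [exists i, P (A i)])))
      (pow (Rminus 1 p) m).
Proof.
move=> n_gt0 P_ge.
have -> : \big[Rplus/R0]_(A : mat01 m n) Rmult (matProb A) (ind (~~ [exists i, P (A i)])) =
          pow (\big[Rplus/R0]_(a : row01 n) Rmult (rowProb a) (ind (~~ P a))) m.
  rewrite -sum_row_products; apply: eq_bigr => A _.
  by rewrite big_split /= prod_ind negb_exists.
apply: pow_incr; split.
  by apply: sum_ge0 => a; apply: Rmult_le_pos; [exact: rowProb_ge0 | exact: ind_ge0].
suff -> : \big[Rplus/R0]_(a : row01 n) Rmult (rowProb a) (ind (~~ P a)) =
          Rminus R1 (\big[Rplus/R0]_(a : row01 n) Rmult (rowProb a) (ind (P a))) by lra.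
rewrite -(rowProb_total n_gt0) -sum_sub; apply: eq_bigr => a _.
by rewrite /ind; case: (P a) => /=; ring.
Qed.

Section UnionBound.
Variables (D m n : nat).
Implicit Types (f : {ffun 'I_D.+1 -> 'I_n}) (A : mat01 m n).

Definition pattern_missed f A : R :=
  Rplus (ind (~~ [exists i, covers f (A i)]))
        (ind (((f ord0 : nat) != 0%N) && ~~ [exists i, separates f (A i)])).

Lemma pattern_missed_ge0 f A : Rle R0 (pattern_missed f A).
Proof. by rewrite /pattern_missed; apply: Rplus_le_le_0_compat; exact: ind_ge0. Qed.

Lemma not_separating_le A :
  Rle (Rminus 1 (ind (separating D A))) (\big[Rplus/R0]_f pattern_missed f A).
Proof.
have [sepA|] := boolP (separating D A).
  by rewrite /ind /Rminus Rplus_opp_r; apply: sum_ge0 => f; exact: pattern_missed_ge0.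
rewrite negb_forall => /existsP [f missed]; rewrite (bigD1 f) //= /ind.
have rest_ge0 : Rle R0 (\big[Rplus/R0]_(g | g != f) pattern_missed g A).
  by apply: (big_ind (Rle R0)) => [|x y|g _]; [lra | lra | exact: pattern_missed_ge0].
suff : Rle 1 (pattern_missed f A) by move: rest_ge0; set rest := bigop _ _ _; lra.
move: missed; rewrite /pattern_missed negb_and negb_imply /ind.
by case: [exists i, covers f (A i)] => /= [->|_]; [|case: (_ && _)]; lra.
Qed.

(* Covering needs D+1 forced coins and separating D+2, so each tuple
   violates the criterion with probability at most 2 (1 - 2^-(D+2))^m. *)
Lemma pattern_missed_prob f : (0 < n)%N ->
  Rle (\big[Rplus/R0]_A Rmult (matProb A) (pattern_missed f A))
      (Rmult 2 (pow (Rminus 1 (pow (/2) D.+2)) m)).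
Proof.
move=> n_gt0; set p := pow (/2) D.+2.
have p_le : Rle p (pow (/2) D.+1).
  by rewrite /p; have := pow_le (/2) D.+1; rewrite /=; lra.
have p_le1 : Rle p 1 by rewrite /p -(pow1 D.+2); apply: pow_incr; lra.
have cover_miss : Rle (\big[Rplus/R0]_(A : mat01 m n)
    Rmult (matProb A) (ind (~~ [exists i, covers f (A i)]))) (pow (Rminus 1 p) m).
  apply: (no_row_prob_le m (P := covers f) n_gt0); apply: Rle_trans p_le _.
  by rewrite -(size_cover_coins f); exact: event_prob_ge n_gt0 (cover_forced (f := f)).
have separate_miss : Rle (\big[Rplus/R0]_(A : mat01 m n)
      Rmult (matProb A) (ind (((f ord0 : nat) != 0%N) && ~~ [exists i, separates f (A i)])))
    (pow (Rminus 1 p) m).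
  have [f0_neq|_] := boolP ((f ord0 : nat) != 0%N); last first.
    by rewrite big1 => [|A _]; [apply: pow_le; lra | rewrite /ind /=; ring].
  apply: (no_row_prob_le m (P := separates f) n_gt0).
  rewrite /p -(size_cover_coins f) -[(size _).+1]/(size (separate_coins f)).
  exact: event_prob_ge n_gt0 (fun c => separate_forced (c := c) f0_neq).
rewrite /pattern_missed; under eq_bigr => A _ do rewrite Rmult_plus_distr_l.
rewrite big_split /=; apply: Rle_trans (Rplus_le_compat _ _ _ _ cover_miss separate_miss) _.
by right; ring.
Qed.
End UnionBound.

Lemma failure_prob_le k m n : (0 < n)%N ->
  Rle (Rminus 1 (probIdent k m n))
      (Rmult (pow (INR n) (2 * k).+1) (Rmult 2 (pow (Rminus 1 (pow (/2) (2 * k).+2)) m))).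
Proof.
move=> n_gt0.
have -> : Rminus 1 (probIdent k m n) = \big[Rplus/R0]_(A : mat01 m n)
    Rmult (matProb A) (Rminus 1 (indicator (identifies k A))).
  under eq_bigr => A _ do rewrite Rmult_minus_distr_l Rmult_1_r.
  by rewrite sum_sub matProb_total.
apply: (Rle_trans _ (\big[Rplus/R0]_(f : {ffun 'I_(2 * k).+1 -> 'I_n})
    \big[Rplus/R0]_(A : mat01 m n) Rmult (matProb A) (pattern_missed f A))).
  rewrite exchange_big /=; apply: sum_le => A; rewrite -big_distrr /=.
  apply: Rmult_le_compat_l; first exact: matProb_ge0.
  apply: (Rle_trans _ _ _ _ (not_separating_le (2 * k) A)).
  rewrite /ind /indicator; case: excluded_middle_informative => [id_A|not_id] /=.
    by case: (separating _ _); lra.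
  by rewrite ifF; [lra | apply/negP => /separating_identifies].
apply: (Rle_trans _ _ _ (sum_le (fun f => @pattern_missed_prob (2 * k) m n f n_gt0))).
by rewrite sum_const_card card_ffun !card_ord -INR_expn; right.
Qed.

Lemma fact_le_exp2 m : (0 < m)%N -> (2 * m`! <= 2 ^ (m * m))%N.
Proof.
elim: m => [|[|m] IH] // _; rewrite factS mulnCA.
apply: (leq_trans (leq_mul (ltnW (ltn_expl m.+2 (isT : 1 < 2)%N)) (IH isT))).
by rewrite -expnD leq_exp2l //; lia.
Qed.

(* The admissible constant: 2^-(2k+2) g(k) > 2k+1, i.e.
   2^(2k+2) (2k-1)! < 2^(4k^2+2k-1). *)
Lemma gk_large k : (1 <= k)%N -> Rlt (INR (2 * k).+1) (Rmult (pow (/2) (2 * k).+2) (gk k)).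
Proof.
move=> k_ge1.
have nat_bound : (2 ^ (2 * k).+2 * (2 * k - 1)`! < 2 ^ (4 * k * k + 2 * k - 1))%N.
  have := @fact_le_exp2 (2 * k - 1) ltac:(lia).
  have : (2 ^ (2 * k).+2 * 2 ^ ((2 * k - 1) * (2 * k - 1)) <= 2 ^ (4 * k * k + 2 * k - 1))%N.
    by rewrite -expnD leq_exp2l //; nia.
  have := fact_gt0 (2 * k - 1); have := expn_gt0 2 (2 * k).+2; nia.
move/ltP/lt_INR: nat_bound; rewrite INR_muln !INR_expn /gk pow_inv (_ : INR 2 = IZR 2) //.
set F := INR _`!; set E := pow _ (_ - 1).
have F_pos : Rlt R0 F by apply: lt_0_INR; apply/ltP; exact: fact_gt0.
have P_pos : Rlt R0 (pow 2 (2 * k).+2) by apply: pow_lt; lra.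
have D_pos : Rlt R0 (INR (2 * k).+1) by apply: lt_0_INR; lia.
rewrite addn1.
move=> bound; apply: (Rmult_lt_reg_r (Rmult F (pow 2 (2 * k).+2))); first nra.
by field_simplify; nra.
Qed.

Lemma probIdent_le1 k m n : (0 < n)%N -> Rle (probIdent k m n) R1.
Proof.
move=> n_gt0; rewrite -(matProb_total m n_gt0) /probIdent; apply: sum_le => A.
have := matProb_ge0 A; rewrite /indicator; case: excluded_middle_informative => _ /=; nra.
Qed.

Lemma pow_exp x m : pow (exp x) m = exp (Rmult (INR m) x).
Proof.
elim: m => [|m IH]; first by rewrite /= Rmult_0_l exp_0.
by rewrite -tech_pow_Rmult IH -exp_plus S_INR; congr exp; ring.
Qed.

Lemma exp_le_mono x y : Rle x y -> Rle (exp x) (exp y).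
Proof. by case=> [/exp_increasing|->]; [left | right]. Qed.

Lemma poly_geometric_le (d : nat) (p g : R) (m n : nat) :
  Rle R0 p -> Rle p 1 -> (0 < n)%N ->
  Rge (INR m) (Rmult g (ln (INR n))) ->
  Rle (Rmult (pow (INR n) d) (pow (Rminus 1 p) m))
      (exp (Rmult (Rminus (INR d) (Rmult p g)) (ln (INR n)))).
Proof.
move=> p_ge0 p_le1 n_gt0 m_ge.
have n_pos : Rlt R0 (INR n) by apply: lt_0_INR; apply/ltP.
have geom : Rle (pow (Rminus 1 p) m) (exp (Rmult (- p) (Rmult g (ln (INR n))))).
  apply: (Rle_trans _ (pow (exp (- p)) m)).
    by apply: pow_incr; have := exp_ineq1_le (- p); lra.
  by rewrite pow_exp; apply: exp_le_mono; nra.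
rewrite -{1}(exp_ln _ n_pos) pow_exp.
apply: (Rle_trans _ _ _ (Rmult_le_compat_l _ _ _ (Rlt_le _ _ (exp_pos _)) geom)).
by rewrite -exp_plus; right; congr exp; ring.
Qed.

Lemma log_decay_small (c eps : R) : Rlt R0 c -> Rlt R0 eps ->
  exists N, forall n, (N <= n)%N ->
    (0 < n)%N /\ Rlt (Rmult 2 (exp (Rmult (- c) (ln (INR n))))) eps.
Proof.
move=> c_pos eps_pos; set L := Rdiv (ln (Rdiv 2 eps)) c.
have [N N_gt] := INR_archimed 1 (exp L) ltac:(lra).
exists N.+1 => n le_Nn; have n_gt0 : (0 < n)%N by lia.
split=> //.
have N_le_n : Rle (INR N) (INR n) by apply: le_INR; lia.
have n_gt : Rlt (exp L) (INR n) by lra.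
have L_lt : Rlt L (ln (INR n)) by rewrite -{1}(ln_exp L); apply: ln_increasing => //; exact: exp_pos.
have -> : eps = Rmult 2 (exp (Rmult (- c) L)).
  rewrite /L (_ : Rmult (- c) (Rdiv (ln (Rdiv 2 eps)) c) = Ropp (ln (Rdiv 2 eps))); last by field; lra.
  by rewrite exp_Ropp exp_ln; [field; lra | apply: Rdiv_lt_0_compat; lra].
by apply: Rmult_lt_compat_l; [lra | apply: exp_increasing; nra].
Qed.

(* Part 2 of the theorem for any constant g with 2^-(2k+2) g > 2k+1:
   by the union bound, 1 - probIdent <= 2 n^(2k+1) (1 - 2^-(2k+2))^m,
   which is at most 2 n^-(2^-(2k+2) g - (2k+1)) once m >= g ln n. *)
Lemma probIdent_cv k (g : R) (m : nat -> nat) :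
  Rlt (INR (2 * k).+1) (Rmult (pow (/2) (2 * k).+2) g) ->
  (forall n, Rge (INR (m n)) (Rmult g (ln (INR n)))) ->
  Un_cv (fun n => probIdent k (m n) n) R1.
Proof.
move=> g_large m_ge eps eps_pos.
set p := pow (/2) (2 * k).+2; set c := Rminus (Rmult p g) (INR (2 * k).+1).
have p_ge0 : Rle R0 p by apply: pow_le; lra.
have p_le1 : Rle p 1 by rewrite /p -(pow1 (2 * k).+2); apply: pow_incr; lra.
have [N N_ok] := log_decay_small (c := c) (Rlt_Rminus _ _ g_large) eps_pos.
exists N => n /leP le_Nn; have [n_gt0 small] := N_ok n le_Nn.
have fail_le : Rle (Rminus 1 (probIdent k (m n) n)) (Rmult 2 (exp (Rmult (- c) (ln (INR n))))).
  apply: Rle_trans (failure_prob_le k (m n) n_gt0) _.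
  have := poly_geometric_le (2 * k).+1 p_ge0 p_le1 n_gt0 (m_ge n).
  rewrite (_ : Rmult (- c) _ = Rmult (Rminus (INR (2 * k).+1) (Rmult p g)) (ln (INR n))).
    by set X := pow (INR n) _; set Y := pow _ (m n); set E := exp _; nra.
  by rewrite /c; ring.
have := probIdent_le1 k (m n) n_gt0; rewrite /Rdist => le1.
by rewrite Rabs_left1; lra.
Qed.

Theorem theorem3 (k : nat) (hk : (1 <= k)%N) :
  (forall (n : nat) (a : row01 n), (5 <= n)%N -> Rgt (rowProb a) R0 -> feasible a)
  /\
  (exists g : R,
     forall m : nat -> nat,
       (forall n : nat, Rge (INR (m n)) (Rmult g (ln (INR n)))) ->
       Un_cv (fun n => probIdent k (m n) n) R1)
  /\
  (forall m : nat -> nat,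
     (forall n : nat, Rge (INR (m n)) (Rmult (gk k) (ln (INR n)))) ->
     Un_cv (fun n => probIdent k (m n) n) R1).
Proof.
have gk_ok := gk_large hk.
split; first by move=> n a n_ge5; exact: chain_row_feasible.
split; first by exists (gk k) => m; exact: probIdent_cv gk_ok.
by move=> m; exact: probIdent_cv gk_ok.
Qed.
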